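(* For every integer $n\ge 0$, $$\sum_{j,k}\genfrac{\{}{\}}{0pt}{}{n}{k}\genfrac{[}{]}{0pt}{}{k}{j}\binom{n}{j}(-1)^k=(-1)^n .$$
   Context: Here $\genfrac{[}{]}{0pt}{}{n}{k}$ denotes the unsigned (absolute) Stirling number of the first kind and $\genfrac{\{}{\}}{0pt}{}{n}{k}$ the ordinary Stirling number of the second kind (Knuth's notation), with $\genfrac{[}{]}{0pt}{}{0}{0}=\genfrac{\{}{\}}{0pt}{}{0}{0}=1$, $\genfrac{[}{]}{0pt}{}{n}{0}=\genfrac{\{}{\}}{0pt}{}{n}{0}=0$ for $n>0$, and $\genfrac{[}{]}{0pt}{}{n}{k}=\genfrac{\{}{\}}{0pt}{}{n}{k}=0$ for $0\le n<k$. The double sum is over all integers $j,k$ with $0\le j\le k\le n$. *)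

From mathcomp Require Import all_boot all_order all_algebra.
Set Implicit Arguments. Unset Strict Implicit. Unset Printing Implicit Defensive.

Fixpoint stirling1 (n k : nat) : nat :=
  match n, k with
  | 0, 0 => 1
  | 0, _.+1 => 0
  | _.+1, 0 => 0
  | n'.+1, k'.+1 => n' * stirling1 n' k'.+1 + stirling1 n' k'
  end.

Fixpoint stirling2 (n k : nat) : nat :=
  match n, k with
  | 0, 0 => 1
  | 0, _.+1 => 0
  | _.+1, 0 => 0
  | n'.+1, k'.+1 => k'.+1 * stirling2 n' k'.+1 + stirling2 n' k'
  end.

(* The Stirling numbers of the second kind expand powers in falling factorials,
   x^n = sum_k {n k} x(x-1)...(x-k+1), while those of the first kind are the
   coefficients of the rising factorials x(x+1)...(x+k-1).  Substituting -x
   turns the k-th falling factorial into (-1)^k times the k-th rising one, so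
   sum_k {n k} (-1)^k x(x+1)...(x+k-1) = (-1)^n x^n.  Comparing coefficients,
   sum_k {n k} [k j] (-1)^k = (-1)^n [j = n], and the binomial weights only
   retain the term j = n, where C(n, n) = 1. *)
From mathcomp Require Import all_boot all_order all_algebra ring.
Import GRing.Theory.
Local Open Scope ring_scope.

Lemma stirling1_eq0 k j : (k < j)%N -> stirling1 k j = 0%N.
Proof. by elim: k j => [|k IH] [|j] //= ltkj; rewrite !IH ?muln0 // ltnW. Qed.

Lemma stirling2_eq0 k j : (k < j)%N -> stirling2 k j = 0%N.
Proof. by elim: k j => [|k IH] [|j] //= ltkj; rewrite !IH ?muln0 // ltnW. Qed.

Lemma stirling1n0 k : stirling1 k 0 = (k == 0%N).
Proof. by case: k. Qed.

Lemma big_ord_shift (V : nmodType) m (g : nat -> V) :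
  g 0%N = 0 -> g m.+1 = 0 -> \sum_(k < m.+1) g k.+1 = \sum_(k < m.+1) g k.
Proof.
move=> g0 gm; have := @big_ord_recr V 0 +%R m.+1 g.
by rewrite big_ord_recl /= g0 gm add0r addr0.
Qed.

Section FactorialPolynomials.

Variable R : comNzRingType.

Definition rising_poly k : {poly R} := \prod_(i < k) ('X + i%:R%:P).

Definition falling_poly k : {poly R} := \prod_(i < k) ('X - i%:R%:P).

Lemma rising_polyS k : rising_poly k.+1 = rising_poly k * ('X + k%:R%:P).
Proof. exact: big_ord_recr. Qed.

Lemma falling_polyS k : falling_poly k.+1 = falling_poly k * ('X - k%:R%:P).
Proof. exact: big_ord_recr. Qed.

Lemma coef_rising_poly k j : (rising_poly k)`_j = (stirling1 k j)%:R.
Proof.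
elim: k j => [|k IH] j; first by rewrite /rising_poly big_ord0 coef1; case: j.
rewrite rising_polyS mulrDr coefD coefMX coefMC.
case: j => [|j] /=; first by rewrite IH stirling1n0 add0r -natrM; case: k {IH}.
by rewrite !IH natrD natrM mulrC addrC.
Qed.

Lemma sum_stirling2_falling_poly n :
  \sum_(k < n.+1) (stirling2 n k)%:R *: falling_poly k = 'X^n.
Proof.
elim: n => [|n IH].
  by rewrite big_ord_recl big_ord0 /falling_poly big_ord0 scale1r addr0.
rewrite exprSr -IH mulr_suml big_ord_recl /= scale0r add0r.
have mulX k : falling_poly k * 'X = falling_poly k.+1 + k%:R *: falling_poly k.
  by rewrite falling_polyS mulrBr -mul_polyC [_%:P * _]mulrC subrK.
under [RHS]eq_bigr do rewrite -scalerAl mulX scalerDr scalerA -natrM.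
rewrite big_split /= addrC.
rewrite -(@big_ord_shift _ n (fun k => (stirling2 n k * k)%:R *: falling_poly k));
  rewrite ?muln0 ?stirling2_eq0 ?mulr0n ?scale0r //.
by rewrite -big_split; apply: eq_bigr => k _; rewrite /= add0n -scalerDl -natrD mulnC.
Qed.

Lemma falling_poly_compN k : falling_poly k \Po - 'X = (-1) ^+ k *: rising_poly k.
Proof.
elim: k => [|k IH]; first by rewrite /falling_poly /rising_poly !big_ord0 comp_polyC scale1r.
rewrite falling_polyS rising_polyS comp_polyM IH comp_polyB comp_polyX comp_polyC.
by rewrite -opprD mulrN -scalerAl exprS mulN1r scaleNr.
Qed.

Lemma sum_stirling2_rising_poly n :
  \sum_(k < n.+1) ((stirling2 n k)%:R * (-1) ^+ k) *: rising_poly k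
  = (-1) ^+ n *: 'X^n.
Proof.
rewrite -exprZn scaleN1r -comp_Xn_poly -sum_stirling2_falling_poly linear_sum.
by apply: eq_bigr => k _; rewrite linearZ /= falling_poly_compN scalerA.
Qed.

Lemma sum_stirling2_stirling1 n j :
  \sum_(k < n.+1) (stirling2 n k * stirling1 k j)%:R * (-1) ^+ k
  = (-1) ^+ n * (j == n)%:R :> R.
Proof.
have := congr1 (fun p : {poly R} => p`_j) (sum_stirling2_rising_poly n).
rewrite /= coefZ coefXn coef_sum => <-.
by apply: eq_bigr => k _; rewrite coefZ coef_rising_poly natrM; ring.
Qed.

End FactorialPolynomials.

Theorem mainTheorem3 (n : nat) :
  \sum_(0 <= k < n.+1) \sum_(0 <= j < k.+1)
     ((stirling2 n k * stirling1 k j * 'C(n, j))%:R * (-1) ^+ k : int)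
  = (-1) ^+ n.
Proof.
set F := fun k j => (stirling2 n k * stirling1 k j * 'C(n, j))%:R * (-1) ^+ k : int.
have widen k : (k < n.+1)%N -> \sum_(0 <= j < k.+1) F k j = \sum_(0 <= j < n.+1) F k j.
  move=> ltkn; rewrite (@big_cat_nat _ _ _ k.+1 0 n.+1) //= [X in _ + X]big1_seq ?addr0 //.
  move=> j /andP[_]; rewrite mem_index_iota => /andP[ltkj _].
  by rewrite /F /= stirling1_eq0 // muln0 mul0n mul0r.
rewrite (eq_big_nat _ _ (fun k ltk => widen k (andP ltk).2)) exchange_big /=.
have inner j : \sum_(0 <= k < n.+1) F k j = 'C(n, j)%:R * ((-1) ^+ n * (j == n)%:R).
  rewrite -sum_stirling2_stirling1 big_mkord mulr_sumr.
  by apply: eq_bigr => k _; rewrite /F /= !natrM; ring.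
rewrite (eq_bigr _ (fun j _ => inner j)) big_nat_recr //= eqxx binn mulr1 mul1r.
rewrite big_nat_cond big1 ?add0r // => j /andP[/andP[_ ltjn] _].
by rewrite (ltn_eqF ltjn) mulr0n !mulr0.
Qed.
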